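(* Let $(M,\cdot,1)$ be a monoid, $\Sigma$ a finite alphabet, $A=(Q,\Sigma,u,i_u,\delta,w,\rho)$ an $M$-DFA and $(g^\pi_A,f^\pi_A)$ the factorization on $L$ induced by $A$ for a selection function $\pi$. Let $N=N^{(g^\pi_A,f^\pi_A)}(f^\pi_A(\mathcal{A}),g^\pi_A(\mathcal{A}))$. Then: 1. $N$ is an $M$-DFA equivalent to $A$; 2. $N$ is transition-equalized; 3. if $A$ is minimal then $N$ is minimal; 4. there exists a minimal and transition-equalized $M$-DFA equivalent to $A$; 5. if $A$ is minimal then $f^\pi_A\circ f^\pi_A=f^\pi_A$; 6. if $A$ is minimal and transition-equalized then $f^{\pi_i}_A=f^{\pi_j}_A$ for any two selection functions $\pi_i,\pi_j$.
   Context: $L$ is the set of all functions $\Sigma^*\to M$; $\varepsilon$ the empty word; $(m\cdot\ell)(\gamma)=m\cdot\ell(\gamma)$; $\Delta_\alpha(\ell)(\gamma)=\ell(\alpha\gamma)$. An $M$-DFA is $A=(Q,\Sigma,u,i_u,\delta,w,\rho)$ with $Q$ finite nonempty, initial state $u$, initial value $i_u\in M$, $\delta:Q\times\Sigma\to Q$, $w:Q\times\Sigma\to M$, $\rho:Q\to M$. Write $q\alpha$ for the extended transition, $w^*(q,\varepsilon)=1$, $w^*(q,\alpha\sigma)=w^*(q,\alpha)\cdot w(q\alpha,\sigma)$; $\mathcal{A}(\alpha)=i_u\cdot w^*(u,\alpha)\cdot\rho(u\alpha)$ is the recognized language and $\mathcal{A}_q(\alpha)=w^*(q,\alpha)\cdot\rho(q\alpha)$.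 Equivalent: same recognized language. Minimal: no equivalent $M$-DFA has fewer states. Transition-equalized: for all $p,q\in Q$, $\sigma,\tau\in\Sigma$, $\Delta_\sigma(\mathcal{A}_q)=\Delta_\tau(\mathcal{A}_p)$ implies $\delta(q,\sigma)=\delta(p,\tau)$ and $w(q,\sigma)=w(p,\tau)$. Induced factorization: $P_A=\{((\sigma,q),\Delta_\sigma(\mathcal{A}_q))\mid\sigma\in\Sigma,q\in Q\}\cup\{((\varepsilon,u),\mathcal{A})\}$, with $\approx_A$ identifying elements with equal language component; a selection function $\pi$ chooses a representative in each class, always choosing $((\varepsilon,u),\mathcal{A})$ for its class. $f^\pi_A(\mathcal{A})=\mathcal{A}_u$, $g^\pi_A(\mathcal{A})=i_u$; if $\ell\neq\mathcal{A}$ is the language component of a class with chosen representative $((\sigma,q),\Delta_\sigma(\mathcal{A}_q))$, then $f^\pi_A(\ell)=\mathcal{A}_{q\sigma}$, $g^\pi_A(\ell)=w(q,\sigma)$; otherwise $f^\pi_A(\ell)=\ell$, $g^\pi_A(\ell)=1$. For $g:L\to M$, $f:L\to L$ with $g(\ell)\cdot f(\ell)=\ell$ for all $\ell$, let $S^{(g,f)}_\varepsilon=\mathrm{id}_L$, $S^{(g,f)}_{\alpha\sigma}=f\circ\Delta_\sigma\circ S^{(g,f)}_\alpha$. For $\ell\in L$, $m\in M$, $N^{(g,f)}(\ell,m)$ is the automaton with state set $\{S^{(g,f)}_\alpha(\ell)\mid\alpha\in\Sigma^*\}$, initial state $\ell$, initial value $m$, $\delta(S^{(g,f)}_\alpha(\ell),\sigma)=S^{(g,f)}_{\alpha\sigma}(\ell)$,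 $w(S^{(g,f)}_\alpha(\ell),\sigma)=g(\Delta_\sigma(S^{(g,f)}_\alpha(\ell)))$, $\rho(S^{(g,f)}_\alpha(\ell))=(S^{(g,f)}_\alpha(\ell))(\varepsilon)$. *)

From Stdlib Require Import ClassicalEpsilon.
From Stdlib Require Lists.List.
From mathcomp Require Import all_boot.

Set Implicit Arguments.
Unset Strict Implicit.
Unset Printing Implicit Defensive.

Record monoid := Monoid {
  mcar :> Type;
  mmul : mcar -> mcar -> mcar;
  mone : mcar;
  mmulA : forall x y z, mmul x (mmul y z) = mmul (mmul x y) z;
  mmul1 : forall x, mmul mone x = x;
  mmulm1 : forall x, mmul x mone = x
}.

Section Defs.
Variables (M : monoid) (Sigma : finType).

Definition lang := seq Sigma -> M.

Definition lscale (m : M) (l : lang) : lang := fun g => mmul m (l g).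

Definition Delta (alpha : seq Sigma) (l : lang) : lang := fun g => l (alpha ++ g).

(* An automaton (Q, Sigma, u, i_u, delta, w, rho); the state set is an
   arbitrary type, finiteness is the predicate [is_mdfa] below. *)
Record dfa := Dfa {
  st : Type;
  init : st;
  ival : M;
  delta : st -> Sigma -> st;
  wt : st -> Sigma -> M;
  rho : st -> M
}.

Definition is_finite (T : Type) := exists s : list T, forall x, List.In x s.
Definition has_card (T : Type) (n : nat) :=
  exists s : list T, List.NoDup s /\ (forall x, List.In x s) /\ List.length s = n.

(* M-DFA: finite nonempty state set (nonempty is automatic: init). *)
Definition is_mdfa (A : dfa) := is_finite (st A).

Definition dstar (A : dfa) (q : st A) (alpha : seq Sigma) : st A :=
  foldl (@delta A) q alpha.

Definition wstar (A : dfa) (q : st A) (alpha : seq Sigma) : M :=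
  (foldl (fun (acc : st A * M) s => (delta acc.1 s, mmul acc.2 (wt acc.1 s)))
         (q, mone M) alpha).2.

Definition lang_q (A : dfa) (q : st A) : lang :=
  fun alpha => mmul (wstar q alpha) (rho (dstar q alpha)).

Definition rlang (A : dfa) : lang := lscale (ival A) (lang_q (init A)).

Definition dfa_equiv (A B : dfa) := rlang A = rlang B.

Definition fewer_states (B A : dfa) :=
  exists nB nA, has_card (st B) nB /\ has_card (st A) nA /\ nB < nA.

Definition minimal (A : dfa) :=
  forall B, is_mdfa B -> dfa_equiv B A -> ~ fewer_states B A.

Definition transition_equalized (A : dfa) :=
  forall (p q : st A) (s t : Sigma),
    Delta [:: s] (lang_q q) = Delta [:: t] (lang_q p) ->
    delta q s = delta p t /\ wt q s = wt p t.

(* Induced factorization.  Elements of P_A are indexed by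
   option (Sigma * Q): [Some (s,q)] is ((s,q), Delta_s(A_q)),
   [None] is ((eps,u), A). *)
Definition PA_lang (A : dfa) (x : option (Sigma * st A)) : lang :=
  match x with
  | None => rlang A
  | Some (s, q) => Delta [:: s] (lang_q q)
  end.
Arguments PA_lang : clear implicits.

(* A selection function chooses, for each class (identified by its common
   language component l), a representative pi l of that class, and chooses
   ((eps,u), A) for the class of A. *)
Definition is_selection (A : dfa) (pi : lang -> option (Sigma * st A)) :=
  (forall x, PA_lang A (pi (PA_lang A x)) = PA_lang A x) /\ pi (rlang A) = None.

Definition in_PA (A : dfa) (l : lang) := exists x, PA_lang A x = l.

Definition fA (A : dfa) (pi : lang -> option (Sigma * st A)) (l : lang) : lang :=
  if excluded_middle_informative (l = rlang A) then lang_q (init A)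
  else if excluded_middle_informative (in_PA A l) then
    match pi l with
    | Some (s, q) => lang_q (delta q s)
    | None => l
    end
  else l.

Definition gA (A : dfa) (pi : lang -> option (Sigma * st A)) (l : lang) : M :=
  if excluded_middle_informative (l = rlang A) then ival A
  else if excluded_middle_informative (in_PA A l) then
    match pi l with
    | Some (s, q) => wt q s
    | None => mone M
    end
  else mone M.

Definition Sop (f : lang -> lang) (alpha : seq Sigma) (l : lang) : lang :=
  foldl (fun l' s => f (Delta [:: s] l')) l alpha.

Lemma Sop_rcons f alpha s l :
  Sop f (rcons alpha s) l = f (Delta [:: s] (Sop f alpha l)).
Proof. by rewrite /Sop foldl_rcons. Qed.

Definition Nstate (f : lang -> lang) (l : lang) :=
  { l' : lang | exists alpha, l' = Sop f alpha l }.

Definition Ninit (f : lang -> lang) (l : lang) : Nstate f l :=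
  exist _ l (ex_intro _ [::] erefl).

Lemma Ndelta_proof (f : lang -> lang) (l : lang) (x : Nstate f l) (s : Sigma) :
  exists alpha, f (Delta [:: s] (proj1_sig x)) = Sop f alpha l.
Proof.
case: x => l' [alpha H] /=; exists (rcons alpha s); by rewrite Sop_rcons H.
Qed.

Definition Ndelta (f : lang -> lang) (l : lang) (x : Nstate f l) (s : Sigma) :
  Nstate f l := exist _ (f (Delta [:: s] (proj1_sig x))) (Ndelta_proof x s).

Definition Nauto (g : lang -> M) (f : lang -> lang) (l : lang) (m : M) : dfa :=
  {| st := Nstate f l;
     init := Ninit f l;
     ival := m;
     delta := @Ndelta f l;
     wt := fun x s => g (Delta [:: s] (proj1_sig x));
     rho := fun x => proj1_sig x [::] |}.

End Defs.

From mathcomp Require Import all_boot.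
From Stdlib Require Import ClassicalEpsilon Classical ProofIrrelevance.
From Stdlib Require Import FunctionalExtensionality.
From Stdlib Require Lists.List FinFun.

(** Since [g l * f l = l], every state [S_alpha(l)] of [N^(g,f)(l, m)] has
    itself as its language, so [N] recognises [m * l] (for the induced
    factorization, [i_u * A_u]) and transitions with equal [Delta_s]-languages
    lead to the same state with the same weight.  The states of [N] are
    languages [A_q] of states of [A], so [N] is no larger than [A].
    In a minimal [A] no [A_q] is a scalar multiple [w * A_r] of another state's
    language, for then [q] could be deleted by redirecting its incoming
    transitions to [r] with extra weight [w].  Hence a representative
    [(s, p)] of the class of [A_q] satisfies [p s = q], so [f] fixes each [A_q]
    and [f o f = f]; if [A] is transition-equalized, [A_(p s)] does not depend
    on the representative at all.  A minimal equivalent DFA exists by descent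
    on the number of states, and its [N] is minimal and transition-equalized. *)

Set Implicit Arguments.
Unset Strict Implicit.
Unset Printing Implicit Defensive.

Lemma proj1_sig_inj (T : Type) (P : T -> Prop) : injective (@proj1_sig T P).
Proof. by case=> [a Ha] [b Hb] /= E; apply: subset_eq_compat. Qed.

Lemma has_card_of_finite (T : Type) : is_finite T -> exists n, has_card T n.
Proof.
move=> finT; have [s [uniq_s full_s]] :=
  proj1 FinFun.Finite_dec (conj finT (fun x y : T => classic (x = y))).
by exists (List.length s), s.
Qed.

Lemma finite_of_inj (S T : Type) (h : S -> T) :
  injective h -> is_finite T -> is_finite S.
Proof.
move=> h_inj [s full_s].
pose preimage (t : T) : list S :=
  match excluded_middle_informative (exists x, h x = t) with
  | left ex_x => [:: proj1_sig (constructive_indefinite_description _ ex_x)]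
  | right _ => [::]
  end.
exists (List.flat_map preimage s) => x; apply/List.in_flat_map.
exists (h x); split => //; rewrite /preimage.
case: excluded_middle_informative => [ex_x | []]; last by exists x.
by case: constructive_indefinite_description => y /= /h_inj ->; left.
Qed.

Lemma has_card_le_of_inj (S T : Type) (h : S -> T) n m :
  injective h -> has_card S n -> has_card T m -> n <= m.
Proof.
move=> h_inj [sS [uniq_sS [_ <-]]] [sT [_ [full_sT <-]]].
rewrite -(List.length_map h); apply/leP; apply: List.NoDup_incl_length => //.
exact: FinFun.Injective_map_NoDup.
Qed.

Lemma has_card_lt_of_inj (S T : Type) (h : S -> T) (t : T) n m :
  injective h -> (forall x, h x <> t) -> has_card S n -> has_card T m -> n < m.
Proof.
move=> h_inj t_out [sS [uniq_sS [_ <-]]] [sT [_ [full_sT <-]]].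
rewrite -(List.length_map h) -/(List.length (t :: List.map h sS)).
apply/leP; apply: List.NoDup_incl_length => //.
constructor; last exact: FinFun.Injective_map_NoDup.
by case/List.in_map_iff => x [/t_out].
Qed.

Lemma has_card_unique (T : Type) n m : has_card T n -> has_card T m -> n = m.
Proof.
move=> card_n card_m; apply/eqP.
by rewrite eqn_leq !(@has_card_le_of_inj T T id).
Qed.

Section Languages.
Variables (M : monoid) (Sigma : finType).
Implicit Types (A B C : dfa M Sigma).

Lemma wstar_foldl A (q : st A) (m : M) (al : seq Sigma) :
  foldl (fun (acc : st A * M) s => (delta acc.1 s, mmul acc.2 (wt acc.1 s)))
        (q, m) al
  = (dstar q al, mmul m (wstar q al)).
Proof.
elim: al q m => [|s al IH] q m /=; first by rewrite /wstar /= mmulm1.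
by rewrite IH [wstar q (s :: al)]/wstar /= IH /= mmul1 mmulA.
Qed.

Lemma lang_q_nil A (q : st A) : lang_q q [::] = rho q.
Proof. by rewrite /lang_q /wstar /= mmul1. Qed.

Lemma lang_q_cons A (q : st A) s al :
  lang_q q (s :: al) = mmul (wt q s) (lang_q (delta q s) al).
Proof. by rewrite /lang_q /wstar /= wstar_foldl /= mmul1 -mmulA. Qed.

Lemma Delta_lang_q A (q : st A) s :
  Delta [:: s] (lang_q q) = lscale (wt q s) (lang_q (delta q s)).
Proof. by apply: functional_extensionality => al; rewrite /Delta lang_q_cons. Qed.

Lemma dfa_equiv_trans A B C : dfa_equiv A B -> dfa_equiv B C -> dfa_equiv A C.
Proof. by rewrite /dfa_equiv => ->. Qed.

End Languages.

Section FactorizationAutomaton.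
Variables (M : monoid) (Sigma : finType).
Variables (g : lang M Sigma -> M) (f : lang M Sigma -> lang M Sigma).
Hypothesis g_mul_f : forall l al, mmul (g l) (f l al) = l al.
Variables (l : lang M Sigma) (m : M).

Lemma lang_q_Nauto (x : st (Nauto g f l m)) : lang_q x = proj1_sig x.
Proof.
apply: functional_extensionality => al; elim: al x => [|s al IH] x.
  by rewrite lang_q_nil.
by rewrite lang_q_cons IH; apply: g_mul_f.
Qed.

Lemma rlang_Nauto : rlang (Nauto g f l m) = lscale m l.
Proof. by rewrite /rlang lang_q_Nauto. Qed.

Lemma Nauto_transition_equalized : transition_equalized (Nauto g f l m).
Proof.
move=> p q s t; rewrite !lang_q_Nauto => E.
by split; [apply: proj1_sig_inj | ]; rewrite /= E.
Qed.

End FactorizationAutomaton.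

Section InducedFactorization.
Variables (M : monoid) (Sigma : finType) (A : dfa M Sigma).
Variable pi : lang M Sigma -> option (Sigma * st A).
Hypothesis pi_sel : is_selection pi.

Lemma selection_repr l : l <> rlang A -> in_PA A l ->
  exists s q, pi l = Some (s, q) /\ Delta [:: s] (lang_q q) = l.
Proof.
move=> l_neq [x E]; have := pi_sel.1 x; rewrite E.
case: (pi l) => [[s q] | ] /= E'; first by exists s, q.
by case: l_neq.
Qed.

Lemma gA_mul_fA l al : mmul (gA pi l) (fA pi l al) = l al.
Proof.
rewrite /gA /fA; case: excluded_middle_informative => [E | l_neq] /=; first by rewrite E.
case: excluded_middle_informative => [l_in | _] /=; last by rewrite mmul1.
have [s [q [-> <-]]] := selection_repr l_neq l_in.
by rewrite /Delta lang_q_cons.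
Qed.

Lemma fA_rlang : fA pi (rlang A) = lang_q (init A).
Proof. by rewrite /fA; case: excluded_middle_informative. Qed.

Lemma fA_in_PA l : in_PA A l -> exists q : st A, fA pi l = lang_q q.
Proof.
move=> l_in; rewrite /fA; case: excluded_middle_informative => [_ | l_neq] /=.
  by exists (init A).
case: excluded_middle_informative => // _ /=.
by have [s [q [-> _]]] := selection_repr l_neq l_in; exists (delta q s).
Qed.

Lemma fA_notin_PA l : ~ in_PA A l -> fA pi l = l.
Proof.
move=> l_out; rewrite /fA; case: excluded_middle_informative => [l_eq | _] /=.
  by case: l_out; exists None.
by case: excluded_middle_informative.
Qed.

Lemma Sop_fA_lang_q al :
  exists q : st A, Sop (fA pi) al (fA pi (rlang A)) = lang_q q.
Proof.
elim/last_ind: al => [|al s [q IH]]; first by exists (init A); rewrite fA_rlang.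
by rewrite Sop_rcons IH; apply: fA_in_PA; exists (Some (s, q)).
Qed.

Definition induced_dfa : dfa M Sigma :=
  Nauto (gA pi) (fA pi) (fA pi (rlang A)) (gA pi (rlang A)).

Lemma induced_dfa_embedding : exists c : st induced_dfa -> st A, injective c.
Proof.
have repr (x : st induced_dfa) : {q : st A | lang_q q = proj1_sig x}.
  apply: constructive_indefinite_description.
  case: x => l [al E] /=; rewrite E.
  by have [q ->] := Sop_fA_lang_q al; exists q.
exists (fun x => proj1_sig (repr x)) => x y E; apply: proj1_sig_inj.
by rewrite -(proj2_sig (repr x)) -(proj2_sig (repr y)) E.
Qed.

Lemma induced_dfa_finite : is_mdfa A -> is_mdfa induced_dfa.
Proof. by have [c c_inj] := induced_dfa_embedding; apply: finite_of_inj c_inj. Qed.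

Lemma induced_dfa_equiv : dfa_equiv induced_dfa A.
Proof.
rewrite /dfa_equiv rlang_Nauto; last exact: gA_mul_fA.
by apply: functional_extensionality => al; apply: gA_mul_fA.
Qed.

Lemma induced_dfa_transition_equalized : transition_equalized induced_dfa.
Proof. by apply: Nauto_transition_equalized; apply: gA_mul_fA. Qed.

Lemma induced_dfa_minimal : is_mdfa A -> minimal A -> minimal induced_dfa.
Proof.
move=> finA minA B finB eqB [nB [nN [card_B [card_N lt_BN]]]].
have [nA card_A] := has_card_of_finite finA.
have [c c_inj] := induced_dfa_embedding.
apply: (minA B finB (dfa_equiv_trans eqB induced_dfa_equiv)).
exists nB, nA; do 2!split => //.
exact: leq_trans lt_BN (has_card_le_of_inj c_inj card_N card_A).
Qed.

End InducedFactorization.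

Lemma fA_selection_independent (M : monoid) (Sigma : finType) (A : dfa M Sigma) :
  transition_equalized A ->
  forall pi1 pi2 : lang M Sigma -> option (Sigma * st A),
    is_selection pi1 -> is_selection pi2 -> fA pi1 = fA pi2.
Proof.
move=> teA pi1 pi2 sel1 sel2; apply: functional_extensionality => l.
rewrite /fA; case: excluded_middle_informative => // l_neq /=.
case: excluded_middle_informative => // l_in /=.
have [s1 [q1 [-> E1]]] := selection_repr sel1 l_neq l_in.
have [s2 [q2 [-> E2]]] := selection_repr sel2 l_neq l_in.
by have [-> _] := teA q2 q1 s1 s2 (etrans E1 (esym E2)).
Qed.

Section RemoveState.
Variables (M : monoid) (Sigma : finType) (A : dfa M Sigma).
Variables (q r : st A) (w : M).
Hypothesis r_neq_q : r <> q.
Hypothesis lang_q_scale : lang_q q = lscale w (lang_q r).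

Definition redirect (x : st A) : {y : st A | y <> q} * M :=
  match excluded_middle_informative (x = q) with
  | left _ => (exist _ r r_neq_q, w)
  | right x_neq_q => (exist _ x x_neq_q, mone M)
  end.

Definition remove_state : dfa M Sigma :=
  {| st := {y : st A | y <> q};
     init := (redirect (init A)).1;
     ival := mmul (ival A) (redirect (init A)).2;
     delta := fun x s => (redirect (delta (proj1_sig x) s)).1;
     wt := fun x s => mmul (wt (proj1_sig x) s) (redirect (delta (proj1_sig x) s)).2;
     rho := fun x => rho (proj1_sig x) |}.

Lemma lang_q_redirect (x : st A) al :
  lang_q x al = mmul (redirect x).2 (lang_q (proj1_sig (redirect x).1) al).
Proof.
by rewrite /redirect; case: excluded_middle_informative => [-> | _] /=;
  rewrite ?lang_q_scale ?mmul1.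
Qed.

Lemma lang_q_remove_state (x : st remove_state) al :
  lang_q x al = lang_q (proj1_sig x) al.
Proof.
elim: al x => [|s al IH] x; first by rewrite !lang_q_nil.
by rewrite !lang_q_cons IH /= -mmulA -lang_q_redirect.
Qed.

Lemma remove_state_equiv : dfa_equiv remove_state A.
Proof.
apply: functional_extensionality => al.
by rewrite /rlang /lscale lang_q_remove_state /= -mmulA -lang_q_redirect.
Qed.

Lemma remove_state_finite : is_mdfa A -> is_mdfa remove_state.
Proof. exact: finite_of_inj (@proj1_sig_inj _ _). Qed.

Lemma remove_state_fewer : is_mdfa A -> fewer_states remove_state A.
Proof.
move=> finA; have [nA card_A] := has_card_of_finite finA.
have [nB card_B] := has_card_of_finite (remove_state_finite finA).
exists nB, nA; do 2!split => //.
apply: (has_card_lt_of_inj (t := q) (@proj1_sig_inj _ _) _ card_B card_A).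
by case.
Qed.

End RemoveState.

Section Minimal.
Variables (M : monoid) (Sigma : finType) (A : dfa M Sigma).
Hypotheses (finA : is_mdfa A) (minA : minimal A).

Lemma minimal_lang_q_scale_inj (q r : st A) w :
  lang_q q = lscale w (lang_q r) -> q = r.
Proof.
move=> lang_q_scale; apply: NNPP => q_neq_r.
have r_neq_q : r <> q by move=> E; apply: q_neq_r.
apply: (minA (remove_state_finite w r_neq_q finA)).
  exact: remove_state_equiv lang_q_scale.
exact: remove_state_fewer.
Qed.

Variable pi : lang M Sigma -> option (Sigma * st A).
Hypothesis pi_sel : is_selection pi.

Lemma fA_lang_q (q : st A) : fA pi (lang_q q) = lang_q q.
Proof.
rewrite /fA; case: excluded_middle_informative => [E | q_neq] /=.
  by rewrite (minimal_lang_q_scale_inj E).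
case: excluded_middle_informative => // q_in /=.
have [s [p [-> E]]] := selection_repr pi_sel q_neq q_in.
by rewrite Delta_lang_q in E; rewrite (minimal_lang_q_scale_inj (esym E)).
Qed.

Lemma fA_idem : fA pi \o fA pi = fA pi.
Proof.
apply: functional_extensionality => l /=.
case: (classic (in_PA A l)) => [l_in | l_out].
  by have [q ->] := fA_in_PA pi_sel l_in; rewrite fA_lang_q.
by rewrite !(fA_notin_PA pi l_out).
Qed.

End Minimal.

Section Existence.
Variables (M : monoid) (Sigma : finType).

Lemma exists_selection (A : dfa M Sigma) :
  exists pi : lang M Sigma -> option (Sigma * st A), is_selection pi.
Proof.
exists (fun l => match excluded_middle_informative (l = rlang A) with
                 | left _ => None
                 | right _ =>
                   match excluded_middle_informative (in_PA A l) with
                   | left l_in => proj1_sig (constructive_indefinite_description _ l_in)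
                   | right _ => None
                   end
                 end).
split; last by case: excluded_middle_informative.
move=> x; case: excluded_middle_informative => [-> | _] //=.
case: excluded_middle_informative => [l_in | []]; last by exists x.
by case: constructive_indefinite_description.
Qed.

Lemma exists_minimal_equiv (A : dfa M Sigma) : is_mdfa A ->
  exists B : dfa M Sigma, is_mdfa B /\ minimal B /\ dfa_equiv B A.
Proof.
move=> finA; have [n card_A] := has_card_of_finite finA.
elim/ltn_ind: n A finA card_A => n IH A finA card_A.
case: (classic (minimal A)) => [minA | not_minA]; first by exists A.
have [B [finB [eqB [nB [nA [card_B [card_A' lt_BA]]]]]]] :
    exists B, is_mdfa B /\ dfa_equiv B A /\ fewer_states B A.
  by apply: NNPP => no_B; apply: not_minA => B finB eqB fewer; apply: no_B; exists B.
rewrite (has_card_unique card_A' card_A) in lt_BA.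
have [C [finC [minC eqC]]] := IH nB lt_BA B finB card_B.
by exists C; do 2!split => //; apply: dfa_equiv_trans eqC eqB.
Qed.

End Existence.

Theorem mainTheorem11 (M : monoid) (Sigma : finType) (A : dfa M Sigma)
    (pi : lang M Sigma -> option (Sigma * st A)) :
  is_mdfa A -> is_selection pi ->
  let N := Nauto (gA pi) (fA pi) (fA pi (rlang A)) (gA pi (rlang A)) in
  (* 1 *) (is_mdfa N /\ dfa_equiv N A) /\
  (* 2 *) transition_equalized N /\
  (* 3 *) (minimal A -> minimal N) /\
  (* 4 *) (exists B : dfa M Sigma,
             is_mdfa B /\ minimal B /\ transition_equalized B /\ dfa_equiv B A) /\
  (* 5 *) (minimal A -> fA pi \o fA pi = fA pi) /\
  (* 6 *) (minimal A -> transition_equalized A ->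
             forall pi1 pi2 : lang M Sigma -> option (Sigma * st A),
               is_selection pi1 -> is_selection pi2 -> fA pi1 = fA pi2).
Proof.
move=> finA sel N.
split; first by split; [exact: induced_dfa_finite | exact: induced_dfa_equiv].
split; first exact: induced_dfa_transition_equalized.
split; first exact: induced_dfa_minimal.
split.
  have [B [finB [minB eqB]]] := exists_minimal_equiv finA.
  have [piB selB] := exists_selection B.
  exists (induced_dfa piB); split; first exact: induced_dfa_finite.
  split; first exact: induced_dfa_minimal.
  split; first exact: induced_dfa_transition_equalized.
  exact: dfa_equiv_trans (induced_dfa_equiv selB) eqB.
split; first by move=> minA; exact: fA_idem.
by move=> _; exact: fA_selection_independent.
Qed.
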